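(* Let $k$ be a field, $V$ a finite-dimensional $k$-vector space and $A$ a finite essential arrangement of linear hyperplanes in $V$ whose intersection lattice $L$ is Boolean (i.e. isomorphic to the lattice of subsets of $A$), with natural sheaf $F$ and $j$-th exterior power $\Lambda^jF$. If $rk L\ge1$ then $$\dim\mathrm{HC}_i(L;\Lambda^jF)=\begin{cases}1&\text{if }i=0\text{ and }j=rk L,\\0&\text{otherwise.}\end{cases}$$
   Context: $L$ consists of all intersections of subsets of $A$ (empty intersection $=V$), ordered by reverse inclusion, with $rk(x)=\operatorname{codim}x$ and $rk L=\operatorname{codim}\bigcap A$; essential means $\bigcap A=\{0\}$. A sheaf assigns a vector space $G(x)$ to each element and a linear map $G^y_x:G(y)\to G(x)$ for $x\le y$, functorially. Natural sheaf: $F(x)=x$, $F^y_x$ the inclusion $y\subseteq x$; $(\Lambda^jF)(x)=\Lambda^j(F(x))$ with maps $\Lambda^j(F^y_x)$. Cellular homology of $L$, viewed as the Boolean lattice on its atoms $\{a_1,\dots,a_n\}$ (an element corresponding to the set of atoms below it): homology of $C_k=\bigoplus_{rk(x)=k}G(x)$ with $d=\sum\varepsilon^x_yG^x_y$ over $y<x$ with $rk y=rk x-1$, where $\varepsilon^x_y=(-1)^{j-1}$ if $x$ corresponds to $\{a_{i_1},\dots,a_{i_k}\}$ ($i_1<\cdots<i_k$) and $y$ to that set with $a_{i_j}$ removed. *)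

From HB Require Import structures.
From mathcomp Require Import all_boot all_order all_algebra.
Set Implicit Arguments. Unset Strict Implicit. Unset Printing Implicit Defensive.
Import GRing.Theory.
Local Open Scope ring_scope.
Local Open Scope vspace_scope.

Section Arrangement.
Variables (K : fieldType) (V : vectType K) (m : nat).
(* An arrangement of m hyperplanes, indexed by 'I_m (the order on 'I_m is the
   ordering a_1 < ... < a_m of the atoms used for the signs). *)
Variable H : 'I_m -> {vspace V}.

Definition meet (S : {set 'I_m}) : {vspace V} := \bigcap_(a in S) H a.

Definition hyperplane_arrangement : Prop :=
  injective H /\ forall a, \dim (H a) = (\dim {: V}).-1.

Definition essential : Prop := meet setT = 0%VS.

Definition rkL : nat := (\dim {: V} - \dim (meet setT))%N.

(* L is Boolean: the map S |-> meet S from the subset lattice of A onto L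
   (L ordered by reverse inclusion) is a lattice isomorphism, i.e. an order
   isomorphism (it is surjective by definition of L). *)
Definition boolean_lattice : Prop :=
  forall S T : {set 'I_m}, (meet T <= meet S)%VS = (S \subset T).

Variable j : nat.
Local Notation n := (\dim {: V}).
(* ambient space for Lambda^j V: functions on j-tuples of coordinate indices *)
Definition ExtAmb := {ffun {ffun 'I_j -> 'I_n} -> K^o}.

Definition wedge (v : 'I_j -> V) : ExtAmb :=
  [ffun c : {ffun 'I_j -> 'I_n} =>
     (\det (\matrix_(a < j, b < j) coord (vbasis {: V}) (c b) (v a)) : K^o)].

(* Lambda^j(x) as the subspace of Lambda^j(V) spanned by the wedges of vectors
   of x (equivalently, of the basis vectors of x). *)
Definition ext_pow (x : {vspace V}) : {vspace ExtAmb} :=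
  <<[seq wedge (fun a => (vbasis x)`_(c a))
     | c : {ffun 'I_j -> 'I_(\dim x)}]>>.

(* total chain space: one summand G(x_S) per subset S (i.e. per element of L) *)
Definition Chains := {ffun {set 'I_m} -> ExtAmb}.

Definition inj_at (S : {set 'I_m}) (e : ExtAmb) : Chains :=
  [ffun T => if T == S then e else 0%R].

(* C_i = (+)_{rk x = i} Lambda^j(x); rk (meet S) = #|S| in the Boolean case *)
Definition chain_sp (i : nat) : {vspace Chains} :=
  (\sum_(S : {set 'I_m} | #|S| == i) (linfun (inj_at S) @: ext_pow (meet S)))%VS.

(* d = sum eps^x_y G^x_y ; the maps G^x_y are inclusions, hence identities on
   the ambient representation. x = T :|: {a}, y = T, eps = (-1)^(position-1). *)
Definition bdry (f : Chains) : Chains :=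
  [ffun T : {set 'I_m} =>
     (\sum_(a : 'I_m | a \notin T)
        ((-1) ^+ #|[set b in T | (b < a)%N]| : K) *: f (a |: T))%R].

Definition bdryL : 'End(Chains) := linfun bdry.

Definition dimHC (i : nat) : nat :=
  (\dim (chain_sp i :&: lker bdryL) - \dim (bdryL @: chain_sp i.+1))%N.

End Arrangement.

(* Booleanness gives, for each hyperplane a, a vector u_a outside H_a lying on all
   the other hyperplanes; the u_a span V, and Lambda^j (meet of H_a, a in S) is
   spanned by the wedges u_c = u_(c 1) /\ ... /\ u_(c j) of index maps c avoiding S.
   Exterior powers of the projections onto H_a along u_a split every chain into
   components indexed by the set R of hyperplanes missed by c.  For a in R,
   "insert a" is a contracting homotopy of the boundary on the R-component.  The
   component R = empty needs c to hit every hyperplane, which forces degree 0 and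
   j = dim V; there it is the line Lambda^(dim V) V, and C_1 = 0. *)

From HB Require Import structures.
From mathcomp Require Import all_boot all_order all_algebra.
From mathcomp Require Import perm.
Set Implicit Arguments. Unset Strict Implicit. Unset Printing Implicit Defensive.
Import GRing.Theory.
Local Open Scope ring_scope.

Lemma det_mulmx_sum_rows (R : comNzRingType) j p
    (A : 'M[R]_(j, p)) (B : 'M[R]_(p, j)) :
  \det (A *m B) =
    \sum_(c : {ffun 'I_j -> 'I_p}) (\prod_a A a (c a)) * \det (\matrix_(a, b) B (c a) b).
Proof.
have expand (s : 'S_j) : \prod_a (A *m B) a (s a) =
    \sum_(c : {ffun 'I_j -> 'I_p}) \prod_a (A a (c a) * B (c a) (s a)).
  under eq_bigr do rewrite mxE; exact: bigA_distr_bigA.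
rewrite /determinant; under eq_bigr do rewrite expand big_distrr.
rewrite exchange_big /=; apply: eq_bigr => c _.
rewrite big_distrr /=; apply: eq_bigr => s _.
by rewrite big_split /= mulrCA; under [X in _ = _ * (_ * X)]eq_bigr do rewrite mxE.
Qed.

Lemma det_mulmx_sum_cols (R : comNzRingType) j p
    (A : 'M[R]_(j, p)) (B : 'M[R]_(p, j)) :
  \det (A *m B) =
    \sum_(c : {ffun 'I_j -> 'I_p}) (\prod_b B (c b) b) * \det (\matrix_(a, b) A a (c b)).
Proof.
rewrite -det_tr trmx_mul det_mulmx_sum_rows; apply: eq_bigr => c _.
under eq_bigr do rewrite mxE.
by rewrite -det_tr; congr (_ * \det _); apply/matrixP => a b; rewrite !mxE.
Qed.

Section ExteriorPower.
Variables (K : fieldType) (V : vectType K) (j : nat).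
Local Notation n := (\dim {: V}).
Local Notation e := (vbasis {: V}).

Lemma wedgeE (v : 'I_j -> V) c :
  wedge v c = \det (\matrix_(a < j, b < j) coord e (c b) (v a) : 'M[K]_j).
Proof. by rewrite ffunE. Qed.

Lemma eq_wedge (v w : 'I_j -> V) : v =1 w -> wedge v = wedge w.
Proof.
move=> vw; apply/ffunP => c; rewrite !wedgeE.
by congr (\det _); apply/matrixP => a b; rewrite !mxE vw.
Qed.

Lemma wedge_expand p (y : 'I_p -> V) (v : 'I_j -> V) (al : 'I_j -> 'I_p -> K) :
    (forall a, v a = \sum_k al a k *: y k) ->
  wedge v = \sum_(c : {ffun 'I_j -> 'I_p}) (\prod_a al a (c a)) *: wedge (fun a => y (c a)).
Proof.
move=> def_v; apply/ffunP => c0; rewrite sum_ffunE wedgeE.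
have -> : (\matrix_(a < j, b < j) coord e (c0 b) (v a) : 'M[K]_j) =
    (\matrix_(a < j, k < p) al a k) *m (\matrix_(k < p, b < j) coord e (c0 b) (y k)).
  apply/matrixP => a b; rewrite !mxE def_v linear_sum; apply: eq_bigr => k _.
  by rewrite linearZ !mxE.
rewrite det_mulmx_sum_rows; apply: eq_bigr => c _; rewrite ffunE wedgeE.
under eq_bigr do rewrite mxE.
by congr (_ * \det _); apply/matrixP => a b; rewrite !mxE.
Qed.

Lemma wedge_repeat (v : 'I_j -> V) a1 a2 : a1 != a2 -> v a1 = v a2 -> wedge v = 0.
Proof.
move=> a12 v12; apply/ffunP => c; rewrite wedgeE ffunE.
by apply: (determinant_alternate a12) => b; rewrite !mxE v12.
Qed.

Lemma wedge_vec0 (v : 'I_j -> V) a : v a = 0 -> wedge v = 0.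
Proof.
move=> va0; apply/ffunP => c; rewrite wedgeE ffunE.
by rewrite (expand_det_row _ a) big1 // => b _; rewrite !mxE va0 linear0 mul0r.
Qed.

Lemma ext_pow_eq0 (x : {vspace V}) : (\dim x < j)%N -> ext_pow j x = 0%VS.
Proof.
move=> dim_x; apply/eqP; rewrite -subv0; apply/span_subvP => _ /mapP [c _ ->].
rewrite memv0; apply/eqP.
have /injectivePn [a1 [a2 a12 c12]] : ~~ injectiveb c.
  by apply/injectiveP => /leq_card; rewrite !card_ord leqNgt dim_x.
by apply: (wedge_repeat a12); rewrite c12.
Qed.

(* The j-th tensor power of the matrix of f, acting on coordinate tensors. *)
Definition ext_map_fun (f : 'End(V)) (F : ExtAmb V j) : ExtAmb V j :=
  [ffun c0 : {ffun 'I_j -> 'I_n} =>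
     \sum_(c : {ffun 'I_j -> 'I_n}) F c * \prod_b coord e (c0 b) (f e`_(c b))].

Lemma ext_map_fun_is_linear f : linear (ext_map_fun f).
Proof.
move=> k F G; apply/ffunP => c0; rewrite !ffunE scaler_sumr -big_split /=.
by apply: eq_bigr => c _; rewrite !ffunE mulrDl scalerAl.
Qed.

HB.instance Definition _ f := GRing.isLinear.Build K (ExtAmb V j) (ExtAmb V j) _
  (ext_map_fun f) (ext_map_fun_is_linear f).

Definition ext_map f : 'End(ExtAmb V j) := linfun (ext_map_fun f).

Lemma ext_map_wedge f (v : 'I_j -> V) : ext_map f (wedge v) = wedge (fun a => f (v a)).
Proof.
rewrite lfunE /=; apply/ffunP => c0; rewrite ffunE wedgeE.
have -> : (\matrix_(a < j, b < j) coord e (c0 b) (f (v a)) : 'M[K]_j) =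
    (\matrix_(a < j, l < n) coord e l (v a)) *m
    (\matrix_(l < n, b < j) coord e (c0 b) (f e`_l)).
  apply/matrixP => a b; rewrite !mxE.
  rewrite {1}(coord_vbasis (memvf (v a))) !linear_sum; apply: eq_bigr => l _.
  by rewrite !linearZ !mxE.
rewrite det_mulmx_sum_cols; apply: eq_bigr => c _; rewrite mulrC wedgeE.
under [in RHS]eq_bigr do rewrite mxE.
by congr (_ * \det _); apply/matrixP => a b; rewrite !mxE.
Qed.

Lemma dim_ext_pow_full : j = n -> \dim (ext_pow j {: V}) = 1%N.
Proof.
move=> jn.
have coord_e (k l : 'I_n) : coord e k e`_l = (l == k)%:R.
  exact/coord_free/basis_free/vbasisP.
pose c1 : {ffun 'I_j -> 'I_n} := [ffun b => cast_ord jn b].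
pose D (c c0 : {ffun 'I_j -> 'I_n}) : 'M[K]_j := \matrix_(a, b) (c a == c0 b)%:R.
have wedgeD (c c0 : {ffun 'I_j -> 'I_n}) : wedge (fun a => e`_(c a)) c0 = \det (D c c0).
  by rewrite wedgeE; congr (\det _); apply/matrixP => a b; rewrite !mxE coord_e.
have D_factor (c c0 : {ffun 'I_j -> 'I_n}) : D c c0 = D c c1 *m D c1 c0.
  apply/matrixP => a b; rewrite !mxE (bigD1 (cast_ord (esym jn) (c a))) //=.
  rewrite !mxE ffunE cast_ordKV eqxx mul1r big1 ?addr0 // => k /negPf k_ne.
  rewrite !mxE ffunE; case: eqP => [ca_k|]; last by rewrite mul0r.
  by move: k_ne; rewrite ca_k cast_ordK eqxx.
(* Every basis wedge is a multiple of [w1], since [D c c0] factors through the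
   identity indexing [c1]. *)
set w1 := wedge (fun a => e`_(c1 a)).
have D11 : D c1 c1 = 1%:M.
  by apply/matrixP => a b; rewrite !mxE !ffunE (inj_eq (@cast_ord_inj _ _ jn)).
have w1_neq0 : w1 != 0.
  apply/eqP => /(congr1 (fun F : ExtAmb V j => F c1)).
  by rewrite /w1 wedgeD D11 det1 ffunE => /eqP; rewrite oner_eq0.
suff -> : ext_pow j {: V} = <[w1]>%VS by rewrite dim_vline w1_neq0.
apply: subv_anti; apply/andP; split.
  apply/span_subvP => _ /mapP [c _ ->]; apply/vlineP; exists (\det (D c c1)).
  by apply/ffunP => c0; rewrite wedgeD [RHS]ffunE /w1 wedgeD D_factor det_mulmx.
by rewrite -memvE; apply: memv_span; apply/mapP; exists c1; rewrite ?mem_enum.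
Qed.

End ExteriorPower.

Section Chains.
Variables (K : fieldType) (V : vectType K) (m j : nat).
Local Notation Chains := (Chains V m j).

Definition sign_at (a : 'I_m) (T : {set 'I_m}) : K :=
  (-1) ^+ #|[set b in T | (b < a)%N]|.

Lemma bdryE (f : Chains) T :
  bdry f T = \sum_(a | a \notin T) sign_at a T *: f (a |: T).
Proof. by rewrite ffunE. Qed.

Lemma bdry_is_linear : linear (@bdry K V m j).
Proof.
move=> k f g; apply/ffunP => T; rewrite !ffunE scaler_sumr -big_split /=.
by apply: eq_bigr => a _; rewrite !ffunE scalerDr !scalerA mulrC.
Qed.

HB.instance Definition _ := GRing.isLinear.Build K Chains Chains _
  (@bdry K V m j) bdry_is_linear.

Lemma inj_at_is_linear S : linear (@inj_at K V m j S).
Proof.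
move=> k x y; apply/ffunP => T; rewrite !ffunE.
by case: (T == S); rewrite ?scaler0 ?addr0.
Qed.

HB.instance Definition _ S := GRing.isLinear.Build K (ExtAmb V j) Chains _
  (@inj_at K V m j S) (inj_at_is_linear S).

Lemma sum_inj_atE (P : pred {set 'I_m}) (x : {set 'I_m} -> ExtAmb V j) T :
  (\sum_(S | P S) inj_at S (x S)) T = if P T then x T else 0.
Proof.
rewrite sum_ffunE; under eq_bigr do rewrite ffunE.
case: ifP => PT; last by rewrite big1 // => S PS; case: eqP => // TS; rewrite -TS PT in PS.
by rewrite (bigD1 T) //= eqxx big1 ?addr0 // => S /andP [_ /negPf]; rewrite eq_sym => ->.
Qed.

Lemma mem_chain_sp (H : 'I_m -> {vspace V}) i (f : Chains) :
  f \in chain_sp H j i <->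
  (forall T : {set 'I_m}, f T \in ext_pow j (meet H T)) /\
  (forall T : {set 'I_m}, #|T| != i -> f T = 0).
Proof.
split=> [/memv_sumP [g g_in ->] | [f_in f_out]].
  have g_inj_at (S : {set 'I_m}) : #|S| == i ->
      g S = inj_at S (g S S) /\ g S S \in ext_pow j (meet H S).
    by move=> /g_in /memv_imgP [x x_in ->]; rewrite lfunE /= ffunE eqxx.
  rewrite (eq_bigr _ (fun S PS => proj1 (g_inj_at S PS))).
  split=> T; rewrite sum_inj_atE; last by move/negPf->.
  by case: ifP => [/g_inj_at [] | _]; rewrite ?rpred0.
have -> : f = \sum_(S : {set 'I_m} | #|S| == i) inj_at S (f S).
  apply/ffunP => T; rewrite sum_inj_atE; case: eqP => // /eqP; exact: f_out.
by apply: memv_sumr => S _; have := memv_img (linfun (inj_at S)) (f_in S); rewrite lfunE.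
Qed.

Lemma sign_at_setU1 (a b : 'I_m) (X : {set 'I_m}) : b \notin X ->
  sign_at a (b |: X) = (-1) ^+ (b < a)%N * sign_at a X.
Proof.
move=> bX; rewrite /sign_at -exprD; congr (_ ^+ _).
have [ba | ab] := ltnP b a.
  have -> : [set c in b |: X | (c < a)%N] = b |: [set c in X | (c < a)%N].
    by apply/setP => c; rewrite !inE; case: eqP => // ->; rewrite ba.
  by rewrite cardsU1 inE (negPf bX).
by apply: eq_card => c; rewrite !inE; case: eqP => // ->; rewrite (negPf bX) ltnNge ab.
Qed.

Lemma sign_at_swap (a b : 'I_m) (X : {set 'I_m}) :
    a != b -> a \notin X -> b \notin X ->
  sign_at b (a |: X) * sign_at a (b |: X) = - (sign_at a X * sign_at b X).
Proof.
move=> ab aX bX; rewrite !sign_at_setU1 // mulrACA [sign_at b X * _]mulrC -signr_addb.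
have -> : (a < b)%N (+) (b < a)%N.
  by case: ltngtP => // /val_inj a_eq_b; rewrite a_eq_b eqxx in ab.
by rewrite expr1 mulN1r.
Qed.

Lemma sign_atK (a : 'I_m) T (v : ExtAmb V j) : sign_at a T *: (sign_at a T *: v) = v.
Proof. exact: signrZK. Qed.

Definition cone (a : 'I_m) (f : Chains) : Chains :=
  [ffun T : {set 'I_m} => if a \in T then sign_at a (T :\ a) *: f (T :\ a) else 0].

Lemma cone_homotopy a f : bdry (cone a f) + cone a (bdry f) = f.
Proof.
apply/ffunP => T; rewrite ffunE bdryE ffunE; under eq_bigr do rewrite ffunE.
have [aT | aT] := boolP (a \in T); last first.
  rewrite addr0 (bigD1 a) //= setU11 setU1K // sign_atK big1 ?addr0 // => b /andP [_ ba].
  by rewrite in_setU1 (negPf aT) orbF eq_sym (negPf ba) scaler0.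
have [X aX ->] : exists2 X : {set 'I_m}, a \notin X & T = a |: X.
  by exists (T :\ a); rewrite ?setD11 ?setD1K.
rewrite setU1K // bdryE (bigD1 a aX) //= scalerDr sign_atK addrCA -[RHS]addr0.
have notin_aX b : (b \notin a |: X) = (b \notin X) && (b != a).
  by rewrite in_setU1 negb_or andbC.
congr (_ + _); rewrite (eq_bigl _ _ notin_aX) scaler_sumr -big_split big1 //=.
move=> b /andP [bX ba]; rewrite in_setU1 setU11 orbT.
rewrite setUCA setU1K; last by rewrite in_setU1 negb_or eq_sym ba.
by rewrite !scalerA -scalerDl sign_at_swap ?addNr ?scale0r // eq_sym.
Qed.

Definition map_chains (g : 'End(ExtAmb V j)) (f : Chains) : Chains :=
  [ffun T : {set 'I_m} => g (f T)].

Lemma bdry_map_chains g f : bdry (map_chains g f) = map_chains g (bdry f).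
Proof.
apply/ffunP => T; rewrite !ffunE linear_sum; apply: eq_bigr => a _.
by rewrite linearZ ffunE.
Qed.

Lemma bdry_cone_cycle a f : bdry f = 0 -> bdry (cone a f) = f.
Proof.
move=> df0; rewrite -[RHS](cone_homotopy a) df0 -[LHS]addr0; congr (_ + _).
by apply/ffunP => T; rewrite !ffunE; case: ifP; rewrite ?ffunE ?scaler0.
Qed.

Lemma bdry_map_chains_cycle g f : bdry f = 0 -> bdry (map_chains g f) = 0.
Proof.
by move=> df0; rewrite bdry_map_chains df0; apply/ffunP => T; rewrite !ffunE linear0.
Qed.

Lemma chain_sp0_sub_ker (H : 'I_m -> {vspace V}) :
  (chain_sp H j 0 <= lker (bdryL V m j))%VS.
Proof.
apply/subvP => f /mem_chain_sp [_ f_out]; rewrite memv_ker lfunE /=.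
apply/eqP/ffunP => T; rewrite bdryE ffunE big1 // => a _.
by rewrite f_out ?scaler0 // cards_eq0; apply/set0Pn; exists a; rewrite setU11.
Qed.

Lemma dim_chain_sp0 (H : 'I_m -> {vspace V}) :
  \dim (chain_sp H j 0) = \dim (ext_pow j {: V}).
Proof.
rewrite /chain_sp (big_pred1 set0) => [|S]; last by rewrite /= cards_eq0.
have -> : meet H set0 = fullv by rewrite /meet big_pred0 // => a; rewrite inE.
rewrite limg_dim_eq //; apply/eqP; rewrite -subv0; apply/subvP => x /memv_capP [_].
by rewrite memv_ker lfunE memv0 => /eqP/ffunP/(_ set0); rewrite !ffunE eqxx => ->.
Qed.

End Chains.

Section BooleanArrangement.
Variables (K : fieldType) (V : vectType K) (m : nat) (H : 'I_m -> {vspace V}).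
Local Notation n := (\dim {: V}).
Hypothesis dim_hyperplane : forall a, \dim (H a) = n.-1.
Hypothesis essentialH : essential H.
Hypothesis booleanH : boolean_lattice H.

Lemma memv_meet (S : {set 'I_m}) v :
  reflect (forall a, a \in S -> v \in H a) (v \in meet H S).
Proof. by rewrite memvE; apply: (iffP subv_bigcapP) => vS a /vS; rewrite memvE. Qed.

Lemma memv_all_hyperplanes v : (forall a, v \in H a) -> v = 0.
Proof.
move=> vH; apply/eqP; rewrite -memv0 -essentialH.
by apply/memv_meet => a _; apply: vH.
Qed.

(* [vpick] returns 0 on the zero space; booleanness rules this out below. *)
Definition ray a := vpick (meet H [set~ a]).

Lemma ray_in_hyperplane a b : b != a -> ray a \in H b.
Proof.
by move=> ba; apply: (memv_meet _ _ (memv_pick _)); rewrite !inE.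
Qed.

Lemma ray_notin_hyperplane a : ray a \notin H a.
Proof.
apply/negP => ray_in.
have : (meet H [set~ a] <= meet H setT)%VS.
  rewrite essentialH subv0 -vpick0; apply/eqP/memv_all_hyperplanes => b.
  by have [-> | ba] := eqVneq b a; last exact: ray_in_hyperplane.
by rewrite booleanH => /subsetP /(_ a (in_setT a)); rewrite !inE eqxx.
Qed.

Lemma ray_neq0 a : ray a != 0.
Proof. by apply: contraNneq (ray_notin_hyperplane a) => ->; rewrite rpred0. Qed.

Lemma hyperplane_cap_ray a : (H a :&: <[ray a]> = 0)%VS.
Proof.
apply/eqP; rewrite -subv0; apply/subvP => w /memv_capP [wH /vlineP [k def_w]].
rewrite memv0 def_w scaler_eq0; apply: contraR (ray_notin_hyperplane a) => /norP [k0 _].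
by rewrite -[ray a](scalerK k0) memvZ // -def_w.
Qed.

Lemma dimvf_gt0 (a : 'I_m) : (0 < n)%N.
Proof.
rewrite lt0n dimv_eq0; apply: contraNneq (ray_neq0 a) => full0.
by rewrite -memv0 -full0 memvf.
Qed.

Lemma hyperplane_add_ray a : (H a + <[ray a]>)%VS = fullv.
Proof.
apply/eqP; rewrite eqEdim subvf /= dimv_disjoint_sum ?hyperplane_cap_ray //.
by rewrite dim_vline ray_neq0 dim_hyperplane addn1 prednK // (dimvf_gt0 a).
Qed.

Definition proj a : 'End(V) := daddv_pi (H a) <[ray a]>.

Lemma proj_id a v : v \in H a -> proj a v = v.
Proof. exact/daddv_pi_id/hyperplane_cap_ray. Qed.

Lemma proj_add_ray a v : proj a v + daddv_pi <[ray a]> (H a) v = v.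
Proof. by rewrite daddv_pi_add ?hyperplane_cap_ray ?hyperplane_add_ray ?memvf. Qed.

Lemma proj_ray a : proj a (ray a) = 0.
Proof.
have := proj_add_ray a (ray a); rewrite daddv_pi_id ?memv_line //.
  by move/(canRL (addrK _)); rewrite subrr.
by rewrite capvC hyperplane_cap_ray.
Qed.

Lemma sub_proj_line a v : exists k, v - proj a v = k *: ray a.
Proof.
by apply/vlineP; rewrite -{1}(proj_add_ray a v) addrC addKr memv_pi.
Qed.

Lemma ray_coords (S : {set 'I_m}) v : v \in meet H S ->
  exists2 k : 'I_m -> K, v = \sum_b k b *: ray b & forall b, b \in S -> k b = 0.
Proof.
move=> vS; have /fin_all_exists [k def_k] := sub_proj_line ^~ v.
exists k => [|b bS]; last first.
  move: (def_k b); rewrite proj_id ?(memv_meet _ _ vS) // subrr.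
  by move/esym/eqP; rewrite scaler_eq0 (negPf (ray_neq0 b)) orbF => /eqP.
apply/eqP; rewrite -subr_eq0; apply/eqP/memv_all_hyperplanes => a.
rewrite (bigD1 a) //= opprD addrA -def_k opprB [v + _]addrC subrK.
rewrite memvB ?memv_pi ?rpred_sum // => b ba.
by rewrite memvZ // ray_in_hyperplane // eq_sym.
Qed.

Lemma dim_le_card : (n <= m)%N.
Proof.
have : (fullv <= <<[seq ray b | b <- enum 'I_m]>>)%VS.
  apply/subvP => v _; have [|k -> _] := @ray_coords set0 v.
    by apply/memv_meet => a; rewrite inE.
  by apply: rpred_sum => b _; rewrite memvZ // memv_span // map_f ?mem_enum.
move/dimvS/leq_trans; apply; apply: leq_trans (dim_span _) _.
by rewrite size_map size_enum_ord.
Qed.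

Variable j : nat.

Definition avoids (S : {set 'I_m}) (c : {ffun 'I_j -> 'I_m}) := [forall a, c a \notin S].

Definition ray_wedge (c : {ffun 'I_j -> 'I_m}) := wedge (fun a => ray (c a)).

Definition ray_span (S : {set 'I_m}) := (\sum_(c | avoids S c) <[ray_wedge c]>)%VS.

Lemma memv_ray_span (S : {set 'I_m}) c : avoids S c -> ray_wedge c \in ray_span S.
Proof. by move=> Sc; rewrite memvE (sumv_sup c Sc) // -memvE memv_line. Qed.

Lemma ray_spanS (S S' : {set 'I_m}) : S \subset S' -> (ray_span S' <= ray_span S)%VS.
Proof.
move=> sSS'; apply/subv_sumP => c S'c; rewrite -memvE memv_ray_span //.
by apply/forallP => a; apply: contra (forallP S'c a); apply/subsetP.
Qed.

Lemma ray_span_map (f : 'End(ExtAmb V j)) (S : {set 'I_m}) (U : {vspace ExtAmb V j}) :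
    (forall c, avoids S c -> f (ray_wedge c) \in U) ->
  forall x, x \in ray_span S -> f x \in U.
Proof.
move=> fU x x_in; apply: subvP (memv_img f x_in).
by rewrite limg_sum; apply/subv_sumP => c Sc; rewrite limg_line -memvE fU.
Qed.

Lemma ext_pow_meet (S : {set 'I_m}) : ext_pow j (meet H S) = ray_span S.
Proof.
apply: subv_anti; apply/andP; split.
  apply/span_subvP => _ /mapP [c _ ->].
  set y := fun a => (vbasis (meet H S))`_(c a).
  have yS a : y a \in meet H S by apply/vbasis_mem/mem_nth; rewrite size_tuple.
  have /fin_all_exists2 [k def_y k_S] := fun a => ray_coords (yS a).
  rewrite (wedge_expand (y := ray) def_y) rpred_sum // => c' _.
  have [Sc' | /forallPn [a]] := boolP (avoids S c').
    by rewrite memvZ ?memv_ray_span.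
  by rewrite negbK => /k_S k0; rewrite (bigD1 a) //= k0 mul0r scale0r rpred0.
apply/subv_sumP => c Sc; rewrite -memvE.
have ray_in a : ray (c a) \in meet H S.
  apply/memv_meet => b bS; apply: ray_in_hyperplane.
  by apply: contraTneq bS => ->; apply: (forallP Sc).
rewrite /ray_wedge (wedge_expand (fun a => coord_vbasis (ray_in a))).
rewrite rpred_sum // => c' _.
by rewrite memvZ // memv_span //; apply/mapP; exists c'; rewrite ?mem_enum.
Qed.

Definition ext_proj a := ext_map j (proj a).

Lemma ext_proj_ray_wedge a c :
  ext_proj a (ray_wedge c) = if a \in codom c then 0 else ray_wedge c.
Proof.
rewrite /ext_proj ext_map_wedge; case: codomP => [[b ->] | c_a].
  by apply: (wedge_vec0 (a := b)); rewrite proj_ray.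
apply: eq_wedge => b; apply: proj_id; apply: ray_in_hyperplane.
by apply/eqP => cb; apply: c_a; exists b.
Qed.

Definition component (R : {set 'I_m}) : 'End(ExtAmb V j) :=
  foldr (fun a g => (if a \in R then ext_proj a else \1 - ext_proj a) \o g)%VF
    \1%VF (enum 'I_m).

Definition missed (c : {ffun 'I_j -> 'I_m}) := [set a | a \notin codom c].

Lemma component_ray_wedge R c :
  component R (ray_wedge c) = if R == missed c then ray_wedge c else 0.
Proof.
have -> : (R == missed c) = all (fun a => (a \in R) == (a \notin codom c)) (enum 'I_m).
  apply/eqP/allP => [-> a _ | R_c]; first by rewrite inE.
  by apply/setP => a; rewrite inE; apply/eqP/R_c; rewrite mem_enum.
rewrite /component; elim: (enum 'I_m) => [|a s IH] /=; first by rewrite id_lfunE.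
rewrite comp_lfunE IH; case: (all _ s); last by rewrite linear0 andbF.
rewrite andbT; case: (a \in R);
  rewrite ?add_lfunE ?opp_lfunE ?id_lfunE ext_proj_ray_wedge;
  by case: (a \in codom c); rewrite /= ?subr0 ?subrr.
Qed.

Lemma component_ray_span (R S : {set 'I_m}) x :
  x \in ray_span S -> component R x \in ray_span (S :|: R).
Proof.
apply: ray_span_map => c Sc; rewrite component_ray_wedge.
case: eqP => [-> | _]; last exact: rpred0.
apply/memv_ray_span/forallP => a; rewrite in_setU inE negb_or negbK (forallP Sc).
by apply/codomP; exists a.
Qed.

Lemma sum_component x : x \in ray_span set0 -> \sum_R component R x = x.
Proof.
move=> x_in; apply/eqP; rewrite -subr_eq0 -memv0.
have -> : \sum_R component R x - x = (\sum_R component R - \1)%VF x.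
  by rewrite add_lfunE opp_lfunE id_lfunE sum_lfunE.
move: x x_in; apply: ray_span_map => c _.
rewrite add_lfunE opp_lfunE id_lfunE sum_lfunE memv0 subr_eq0.
rewrite (bigD1 (missed c)) //= component_ray_wedge eqxx big1 ?addr0 // => R.
by rewrite component_ray_wedge => /negPf ->.
Qed.

Lemma component0 (T : {set 'I_m}) x :
  x \in ray_span T -> (T != set0) || (j != n) -> component set0 x = 0.
Proof.
move=> x_in T_j; apply/eqP; rewrite -memv0; move: x x_in.
apply: ray_span_map => c Tc.
rewrite component_ray_wedge; case: eqP => [c_onto | _]; last exact: rpred0.
have c_hits a : a \in codom c by move/setP/(_ a): c_onto; rewrite !inE => /esym/negbFE.
case/orP: T_j => [/set0Pn [a aT] | jn].
  by case/codomP: (c_hits a) => b cb; move/forallP/(_ b): Tc; rewrite -cb aT.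
have m_le_j : (m <= j)%N.
  rewrite -[m]card_ord -[j]card_ord -(size_codom c); apply: leq_trans (card_size _).
  by apply/subset_leq_card/subsetP => a _; apply: c_hits.
have : ray_wedge c \in ext_pow j (meet H set0).
  by rewrite ext_pow_meet memv_ray_span //; apply/forallP => a; rewrite inE.
rewrite ext_pow_eq0 //; apply: leq_ltn_trans (dimvS (subvf _)) _.
by rewrite ltn_neqAle eq_sym jn (leq_trans dim_le_card m_le_j).
Qed.

Lemma cone_mem_chain_sp (i : nat) a (R : {set 'I_m}) (g : Chains V m j) :
    a \in R ->
    (forall T : {set 'I_m}, g T \in ray_span (T :|: R)) ->
    (forall T : {set 'I_m}, #|T| != i -> g T = 0) ->
  cone a g \in chain_sp H j i.+1.
Proof.
move=> aR g_in g_out; apply/mem_chain_sp; split=> T; rewrite ffunE;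
  case: ifP => aT; rewrite ?rpred0 //.
  rewrite ext_pow_meet memvZ // (subvP (ray_spanS _) _ (g_in _)) //.
  apply/subsetP => b bT; rewrite in_setU in_setD1 bT andbT.
  by case: eqVneq => [-> | _]; rewrite ?aR ?orbT.
move=> Ti; rewrite g_out ?scaler0 //; apply: contra Ti.
by rewrite (cardsD1 a T) aT add1n => /eqP ->.
Qed.

Lemma cycle_is_boundary (i : nat) f : (i != 0%N) || (j != n) ->
    f \in chain_sp H j i -> bdry f = 0 ->
  exists2 g, g \in chain_sp H j i.+1 & bdry g = f.
Proof.
move=> i_j /mem_chain_sp [f_in f_out] df0.
have f_ray (T : {set 'I_m}) : f T \in ray_span T by rewrite -ext_pow_meet.
pose fR R := map_chains (component R) f.
have fR0 : fR set0 = 0.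
  apply/ffunP => T; rewrite !ffunE.
  have [Ti | /f_out ->] := eqVneq #|T| i; last exact: linear0.
  by apply: (component0 (f_ray T)); rewrite -cards_eq0 Ti.
pose g (R : {set 'I_m}) := if [pick a in R] is Some a then cone a (fR R) else 0.
have bdry_g R : bdry (g R) = fR R.
  rewrite /g; case: pickP => [a _ | R0].
    exact/bdry_cone_cycle/bdry_map_chains_cycle.
  suff -> : R = set0 by rewrite fR0 linear0.
  by apply/setP => a; rewrite inE R0.
exists (\sum_R g R).
  apply: rpred_sum => R _; rewrite /g; case: pickP => [a aR | _]; last exact: rpred0.
  apply: cone_mem_chain_sp aR _ _ => T; rewrite ffunE; first exact: component_ray_span.
  by move/f_out ->; rewrite linear0.
rewrite linear_sum (eq_bigr _ (fun R _ => bdry_g R)); apply/ffunP => T.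
rewrite sum_ffunE; under eq_bigr do rewrite ffunE.
by rewrite sum_component // (subvP (ray_spanS (sub0set T))).
Qed.

Lemma chain_sp1_eq0 : j = n -> chain_sp H j 1 = 0%VS.
Proof.
move=> jn; apply/vspaceP => f; rewrite memv0.
apply/idP/eqP => [|->]; last exact: rpred0.
case/mem_chain_sp => f_in f_out; apply/ffunP => T; rewrite ffunE.
have [/eqP/cards1P [a T_a] | /f_out //] := eqVneq #|T| 1%N.
move: (f_in T); rewrite ext_pow_eq0 ?memv0 => [/eqP //|].
by rewrite T_a /meet big_set1 jn dim_hyperplane ltn_predL (dimvf_gt0 a).
Qed.

End BooleanArrangement.

Theorem proposition7 (K : fieldType) (V : vectType K) (m : nat)
  (H : 'I_m -> {vspace V}) :
  hyperplane_arrangement H -> essential H -> boolean_lattice H ->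
  (1 <= rkL H)%N ->
  forall i j : nat,
    dimHC H j i = (if (i == 0%N) && (j == rkL H) then 1%N else 0%N).
Proof.
move=> [_ dim_H] hE hB _ i j.
have -> : rkL H = \dim {: V} by rewrite /rkL hE dimv0 subn0.
have [/andP [/eqP -> /eqP jn] | i_j] := boolP ((i == 0%N) && (j == \dim {: V})).
  rewrite /dimHC (capv_idPl (chain_sp0_sub_ker j H)) (chain_sp1_eq0 dim_H hE hB jn).
  by rewrite limg0 dimv0 subn0 dim_chain_sp0 dim_ext_pow_full.
(* [dimHC] is a truncated difference, so cycles contained in boundaries give 0. *)
apply/eqP; rewrite subn_eq0 dimvS //; apply/subvP => f /memv_capP [f_in].
rewrite memv_ker lfunE /= => /eqP df0.
have [|g g_in <-] := cycle_is_boundary dim_H hE hB _ f_in df0.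
  by rewrite -negb_and.
by have := memv_img (bdryL V m j) g_in; rewrite lfunE.
Qed.
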